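(* Let $q$ be a prime power and let $n,k,r,x$ be integers with $0\le x\le r\le \min(n,k)$. Let $\mathbf{M}$ be a random $n\times k$ matrix over $\mathbb{F}_q$ whose entries are independent and uniformly distributed on $\mathbb{F}_q$, conditioned on $\mathrm{rank}(\mathbf{M})=r$, and let $X=\{i\in\{1,\dots,k\}:\mathbf{e}_i\in\mathrm{Row}(\mathbf{M})\}$. Then $$P(|X|\ge x\mid R=r,\,N=n)=\frac{1}{\binom{k}{r}_q}\sum_{i=x}^{r}\binom{k}{i}\sum_{j=0}^{k-i}(-1)^j\binom{k-i}{j}\binom{k-i-j}{r-i-j}_q .$$
   Context: $\mathbf{e}_i$ denotes the $i$-th standard unit vector of $\mathbb{F}_q^k$, and $\mathrm{Row}(\mathbf{M})$ is the row space of $\mathbf{M}$. $R$ denotes the rank of $\mathbf{M}$ and $N$ its number of rows. $\binom{m}{d}$ is the ordinary binomial coefficient. $\binom{m}{d}_q$ is the Gaussian binomial coefficient, i.e. the number of $d$-dimensional subspaces of an $m$-dimensional vector space over $\mathbb{F}_q$, $\binom{m}{d}_q=\prod_{i=0}^{d-1}\frac{q^{m}-q^{i}}{q^{d}-q^{i}}$ for $0\le d\le m$. By convention $\binom{m}{d}_q=0$ if $d<0$ or $d>m$. *)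

From HB Require Import structures.
From mathcomp Require Import all_boot all_order all_algebra.
Set Implicit Arguments. Unset Strict Implicit. Unset Printing Implicit Defensive.
Import Order.TTheory GRing.Theory Num.Theory.

Local Open Scope ring_scope.

Definition gbin (q : nat) (m d : int) : rat :=
  if (0 <= d) && (d <= m) then
    \prod_(i < `|d|%N) (((q%:Q) ^+ `|m|%N - (q%:Q) ^+ i) / ((q%:Q) ^+ `|d|%N - (q%:Q) ^+ i))
  else 0.

Definition unit_rows_in (F : fieldType) (n k : nat) (M : 'M[F]_(n, k)) : {set 'I_k} :=
  [set i : 'I_k | ((delta_mx (0 : 'I_1) i : 'rV[F]_k) <= M)%MS].

From HB Require Import structures.
From mathcomp Require Import all_boot all_order all_algebra.
Import Order.TTheory GRing.Theory Num.Theory.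
Set Implicit Arguments. Unset Strict Implicit. Unset Printing Implicit Defensive.
Local Open Scope ring_scope.

(* A rank-r matrix M factors as C *m B with B a basis of its row space and C a
   full-rank n x r matrix, so every r-dimensional subspace of F_q^k is the row
   space of equally many matrices, and the probability is the proportion of
   r-dimensional subspaces V with |X(V)| >= x. Counting ordered extensions of a
   basis shows that the r-subspaces containing e_i for all i in U number
   [k - |U| choose r - |U|]_q. Inclusion-exclusion, [x <= |A|] =
   sum_(|S| >= x) sum_(S <= U <= A) (-1)^(|U|-|S|), then expresses the count
   through these numbers, and grouping the sets S, U by cardinality gives the
   binomial coefficients. *)

Section SubsetSums.
Variable T : finType.

Lemma sum_subsets_card (R : nmodType) (B : {set T}) (g : nat -> R) :
  \sum_(V : {set T} | V \subset B) g #|V| = \sum_(j < #|B|.+1) g j *+ 'C(#|B|, j).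
Proof.
rewrite (partition_big (fun V : {set T} => inord #|V| : 'I_#|B|.+1) xpredT) //=.
apply: eq_bigr => j _; rewrite -cards_draws -sumr_const.
have cardV (V : {set T}) : V \subset B -> (inord #|V| == j :> 'I__) = (#|V| == j).
  by move=> sVB; rewrite -val_eqE /= inordK // ltnS (subset_leq_card sVB).
rewrite [RHS]big_mkcond [LHS]big_mkcond; apply: eq_bigr => V _; rewrite !inE.
by case: (boolP (V \subset B)) => //= /cardV ->; case: eqP => // ->.
Qed.

Lemma sum_supsets_card (R : nmodType) (S A : {set T}) (g : nat -> R) : S \subset A ->
  \sum_(U : {set T} | (S \subset U) && (U \subset A)) g #|U| =
  \sum_(j < (#|A| - #|S|).+1) g (#|S| + j)%N *+ 'C(#|A| - #|S|, j).
Proof.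
move=> sSA; have -> : (#|A| - #|S|)%N = #|A :\: S| by rewrite cardsD (setIidPr sSA).
rewrite -(sum_subsets_card _ (fun j => g (#|S| + j)%N)).
rewrite (reindex_onto (fun V => S :|: V) (fun U => U :\: S)) /=; last first.
  by move=> U /andP[sSU _]; rewrite -{2}(setID U S) (setIidPr sSU).
apply: eq_big => [V | V]; rewrite subsetUl setDUl setDv set0U.
  by rewrite subsetD subUset sSA; congr andb; apply/eqP/setDidPl.
by case/andP => _ /eqP/setDidPl dVS; rewrite cardsU setIC (disjoint_setI0 dVS) cards0 subn0.
Qed.

Lemma sum_supsets_cardT (R : nmodType) (S : {set T}) (g : nat -> R) :
  \sum_(U : {set T} | S \subset U) g #|U| =
  \sum_(j < (#|T| - #|S|).+1) g (#|S| + j)%N *+ 'C(#|T| - #|S|, j).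
Proof.
rewrite -cardsT -(sum_supsets_card g (subsetT S)).
by apply: eq_bigl => U; rewrite subsetT andbT.
Qed.

Lemma sum_sign_supsets (R : pzRingType) (S A : {set T}) : S \subset A ->
  \sum_(U : {set T} | (S \subset U) && (U \subset A)) (-1) ^+ (#|U| - #|S|) = (S == A)%:R :> R.
Proof.
move=> sSA; rewrite (sum_supsets_card (fun u => (-1) ^+ (u - #|S|)) sSA).
under eq_bigr do rewrite addKn.
by rewrite -exprD1n addNr expr0n eqEsubset sSA /= -setD_eq0 -cards_eq0 cardsD (setIidPr sSA).
Qed.

Lemma sum_card_geq (R : nmodType) (h : nat -> R) x :
  \sum_(S : {set T} | (x <= #|S|)%N) h #|S| = \sum_(x <= i < #|T|.+1) h i *+ 'C(#|T|, i).
Proof.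
transitivity (\sum_(S : {set T} | S \subset setT) if (x <= #|S|)%N then h #|S| else 0).
  by rewrite [LHS]big_mkcond; apply: eq_bigl => S; rewrite subsetT.
rewrite (sum_subsets_card _ (fun i => if (x <= i)%N then h i else 0)).
rewrite cardsT big_geq_mkord [RHS]big_mkcond.
by apply: eq_bigr => i _; case: ifP; rewrite ?mul0rn.
Qed.

Lemma sum_sign_supsets_card_geq (R : pzRingType) (A : {set T}) x :
  \sum_(S : {set T} | (x <= #|S|)%N)
    \sum_(U : {set T} | (S \subset U) && (U \subset A)) (-1) ^+ (#|U| - #|S|) =
  (x <= #|A|)%:R :> R.
Proof.
transitivity (\sum_(S : {set T} | (x <= #|S|)%N) (S == A)%:R : R).
  apply: eq_bigr => S _; have [sSA | nsSA] := boolP (S \subset A).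
    exact: sum_sign_supsets.
  rewrite big_pred0 => [|U]; last by apply: contraNF nsSA => /andP[/subset_trans]; apply.
  by case: eqP nsSA => // ->; rewrite subxx.
have [xA | Ax] := boolP (x <= #|A|)%N.
  by rewrite (bigD1 A) //= eqxx big1 ?addr0 // => S /andP[_ /negbTE ->].
by rewrite big1 // => S xS; case: eqP xS => // ->; rewrite (negbTE Ax).
Qed.

Lemma card_geq_incl_excl (R : pzRingType) (I : finType) (P : pred I) (X : I -> {set T}) x :
  #|[set i | P i & (x <= #|X i|)%N]|%:R =
  \sum_(S : {set T} | (x <= #|S|)%N) \sum_(U : {set T} | S \subset U)
    (-1) ^+ (#|U| - #|S|) * #|[set i | P i & U \subset X i]|%:R :> R.
Proof.
have cardE (Q : pred I) : #|[set i | P i & Q i]|%:R = \sum_(i | P i) (Q i)%:R :> R.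
  rewrite -sum1_card natr_sum [LHS]big_mkcond [RHS]big_mkcond; apply: eq_bigr => i _.
  by rewrite inE; case: (P i); case: (Q i).
rewrite cardE; under eq_bigr do rewrite -(sum_sign_supsets_card_geq R).
rewrite exchange_big; apply: eq_bigr => S _.
under eq_bigr do rewrite big_mkcondr.
rewrite exchange_big; apply: eq_bigr => U _; rewrite cardE mulr_sumr.
by apply: eq_bigr => i _; case: (U \subset X i); rewrite ?mulr1 ?mulr0.
Qed.
End SubsetSums.

Section RowSpaces.
Variable F : fieldType.

Lemma mxrank_adds_row m d (W : 'M[F]_(m, d)) (v : 'rV[F]_d) :
  \rank (W + v)%MS = (\rank W + ~~ (v <= W)%MS)%N.
Proof.
have [sVW|nsVW] := boolP (v <= W)%MS.
  by rewrite addn0 (addsmx_idPl sVW).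
apply/eqP; rewrite eqn_leq addn1 andbC.
rewrite (ltn_leqif (mxrank_leqif_sup (addsmxSl W v))) addsmx_sub submx_refl nsVW /=.
apply: leq_trans (mxrank_adds_leqif W v).1 _.
by rewrite -[X in (_ <= X)%N]addn1 leq_add2l rank_leq_row.
Qed.

Lemma row_free_col_mx_row s t d (B : 'M[F]_(s, d)) (A : 'M[F]_(t, d)) (v : 'rV[F]_d) :
  row_free (col_mx B (col_mx v A) : 'M_(s + (1 + t), d)) =
  row_free (col_mx B A) && ~~ (v <= col_mx B A)%MS.
Proof.
rewrite /row_free.
have -> : \rank (col_mx B (col_mx v A)) = \rank (col_mx B A + v)%MS.
  rewrite -addsmxE -(adds_eqmx (eqmx_refl B) (addsmxE v A)).
  rewrite -(adds_eqmx (addsmxE B A) (eqmx_refl v)).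
  by rewrite addsmxA [(B + v)%MS]addsmxC [in RHS]addsmxC addsmxA.
rewrite mxrank_adds_row addnCA add1n.
have := rank_leq_row (col_mx B A); case: (v <= _)%MS => /= rk.
  by rewrite addn0 andbF ltn_eqF // ltnS.
by rewrite andbT addn1 eqSS.
Qed.

Definition unit_span k (U : {set 'I_k}) : 'M[F]_k :=
  (\sum_(i in U) <<delta_mx 0 i : 'rV[F]_k>>)%MS.

Lemma unit_span_sub n k (U : {set 'I_k}) (V : 'M[F]_(n, k)) :
  (unit_span U <= V)%MS = (U \subset unit_rows_in V).
Proof.
apply/sumsmx_subP/subsetP => [sUV i iU | sUV i iU]; first by rewrite inE -genmxE sUV.
by rewrite genmxE; have := sUV i iU; rewrite inE.
Qed.

Lemma mxrank_unit_span k (U : {set 'I_k}) : \rank (unit_span U) = #|U|.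
Proof.
have /mxdirectP /= -> := @mxdirect_delta F _ (mem U) k id (fun _ _ _ _ => id).
by rewrite -sum1_card; apply: eq_bigr => i _; rewrite mxrank_gen mxrank_delta.
Qed.

Lemma unit_rows_in_genmx n k (M : 'M[F]_(n, k)) : unit_rows_in <<M>>%MS = unit_rows_in M.
Proof. by apply/setP => i; rewrite !inE genmxE. Qed.
End RowSpaces.

Lemma gbin_prod_ratio q k r u : (1 < q)%N -> (u <= r)%N -> (r <= k)%N ->
  (\prod_(i < r - u) (q ^ k - q ^ (u + i)))%N%:Q /
  (\prod_(i < r - u) (q ^ r - q ^ (u + i)))%N%:Q = gbin q (k - u)%N%:Z (r%:Z - u%:Z).
Proof.
move=> q_gt1 ur rk; rewrite /gbin subzn // lez_nat leq_sub2r //=.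
rewrite -!pmulrn !natr_prod -prodf_div; apply: eq_bigr => i _.
have ui_r : (u + i < r)%N by rewrite -ltn_subRL ltn_ord.
have qu_neq0 : (q%:R : rat) ^+ u != 0 by rewrite expf_neq0 // pnatr_eq0 -lt0n ltnW.
rewrite !natrB ?leq_exp2l ?(ltnW ui_r) ?(leq_trans (ltnW ui_r)) // !natrX.
have -> : (q%:R : rat) ^+ k = q%:R ^+ u * q%:R ^+ (k - u).
  by rewrite -exprD subnKC // (leq_trans ur).
have -> : (q%:R : rat) ^+ r = q%:R ^+ u * q%:R ^+ (r - u) by rewrite -exprD subnKC.
rewrite exprD -!mulrBr.
by rewrite -mulf_div divff // mul1r.
Qed.

Section FiniteField.
Variable F : finFieldType.
Local Notation q := #|F|.

Lemma card_rV_submx m d (V : 'M[F]_(m, d)) :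
  #|[set v : 'rV[F]_d | (v <= V)%MS]| = (q ^ \rank V)%N.
Proof.
have -> : [set v : 'rV[F]_d | (v <= V)%MS] =
          [set u *m row_base V | u in [set: 'rV[F]_(\rank V)]].
  apply/setP => v; rewrite inE -(eq_row_base V).
  by apply/submxP/imsetP => [[u ->]|[u _ ->]]; exists u.
rewrite card_imset ?cardsT ?card_mx ?mul1n //.
have [B hB] := row_freeP (row_base_free V).
by apply: (can_inj (g := mulmx^~ B)) => u; rewrite -mulmxA hB mulmx1.
Qed.

Lemma card_rV_submxD m p d (V : 'M[F]_(m, d)) (W : 'M[F]_(p, d)) : (W <= V)%MS ->
  #|[set v : 'rV[F]_d | (v <= V)%MS && ~~ (v <= W)%MS]| = (q ^ \rank V - q ^ \rank W)%N.
Proof.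
move=> sWV; have sWV' : [set v : 'rV_d | (v <= W)%MS] \subset [set v | (v <= V)%MS].
  by apply/subsetP => v; rewrite !inE => /submx_trans->.
rewrite -!card_rV_submx -[in RHS](setIidPr sWV') -cardsD.
by apply: eq_card => v; rewrite !inE andbC.
Qed.

Lemma card_row_free_ext p s d t (V : 'M[F]_(p, d)) (B : 'M[F]_(s, d)) :
  row_free B -> (B <= V)%MS ->
  #|[set C : 'M[F]_(t, d) | (C <= V)%MS && row_free (col_mx B C)]| =
  (\prod_(i < t) (q ^ \rank V - q ^ (s + i)))%N.
Proof.
move=> freeB sBV; elim: t => [|t IHt].
  rewrite big_ord0 -(cards1 (0 : 'M[F]_(0, d))); apply: eq_card => C.
  by rewrite !inE [C]flatmx0 eqxx sub0mx /row_free -addsmxE addsmx0 addn0.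
rewrite big_ord_recr /= -IHt -sum_nat_const -sum1_card -[t.+1]/(1 + t)%N.
set S := [set C : 'M[F]_(t, d) | _].
rewrite (partition_big dsubmx (mem S)) /= => [|C]; last first.
  rewrite !inE -{1 2}(vsubmxK C) col_mx_sub row_free_col_mx_row.
  by case/andP => /andP[_ ->] /andP[->].
apply: eq_bigr => A; rewrite inE => /andP[sAV freeBA].
rewrite (reindex (col_mx^~ A)) /=; last first.
  exists usubmx => [v _ | C]; first by rewrite col_mxKu.
  by rewrite inE => /andP[_ /eqP <-]; rewrite vsubmxK.
have sBAV : (col_mx B A <= V)%MS by rewrite col_mx_sub sBV.
rewrite -(eqP freeBA) -card_rV_submxD // sum1_card; apply: eq_card => v.
rewrite unfold_in /= !inE col_mxKd eqxx andbT col_mx_sub row_free_col_mx_row sAV freeBA /=.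
by case: (v <= V)%MS.
Qed.

(* A subspace is represented by the canonical square matrix [<<V>>] of its rows. *)
Definition subspaces k r : {set 'M[F]_k} := [set V | (<<V>>%MS == V) && (\rank V == r)].

Lemma card_subspaces_supmx k r (W : 'M[F]_k) : (\rank W <= r)%N ->
  (#|[set V in subspaces k r | (W <= V)%MS]| *
    \prod_(i < r - \rank W) (q ^ r - q ^ (\rank W + i)))%N =
  (\prod_(i < r - \rank W) (q ^ k - q ^ (\rank W + i)))%N.
Proof.
(* Extend a basis of W by r - rank W rows in all row-free ways: grouped by
   the space V they span, each V containing W receives the left-hand product. *)
move=> rWr; set s := \rank W; set B := row_base W.
have := card_row_free_ext (r - s) (row_base_free W) (submx1 B); rewrite mxrank1 => <-.
rewrite -sum_nat_const -[RHS]sum1_card.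
rewrite [RHS](partition_big (fun C : 'M[F]_(r - s, k) => <<col_mx B C>>%MS)
   (mem [set V in subspaces k r | (W <= V)%MS])) /=; last first.
  move=> C; rewrite !inE genmx_id eqxx mxrank_gen /= => /andP[_ freeBC].
  have sBBC : (B <= col_mx B C)%MS by rewrite -addsmxE addsmxSl.
  have sWB : (W <= B)%MS by rewrite eq_row_base.
  by rewrite genmxE (submx_trans sWB sBBC) andbT (eqP freeBC) subnKC.
apply: eq_bigr => V; rewrite !inE => /andP[/andP[genV rankV] sWV].
have sBV : (B <= V)%MS by rewrite eq_row_base.
have := card_row_free_ext (r - s) (row_base_free W) sBV; rewrite (eqP rankV) => <-.
rewrite sum1_card; apply: eq_card => C; rewrite !inE [RHS]unfold_in /= inE submx1 /=.
apply/andP/andP => [[sCV freeBC]|[freeBC /eqP <-]]; last first.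
  by rewrite genmxE -addsmxE addsmxSr.
split=> //; rewrite -(eqP genV); apply/eqP/genmxP.
have sBCV : (col_mx B C <= V)%MS by rewrite col_mx_sub sBV.
by rewrite -(mxrank_leqif_eq sBCV).2 (eqP rankV) (eqP freeBC) subnKC.
Qed.

Lemma card_subspaces_unit_rows k r (U : {set 'I_k}) : (r <= k)%N ->
  #|[set V in subspaces k r | U \subset unit_rows_in V]|%:Q =
  gbin q (k - #|U|)%N%:Z (r%:Z - #|U|%:Z).
Proof.
move=> rk; have q_gt1 := card_finNzRing_gt1 F.
have -> : [set V in subspaces k r | U \subset unit_rows_in V] =
          [set V in subspaces k r | (unit_span F U <= V)%MS].
  by apply/setP => V; rewrite !inE unit_span_sub.
have [Ur | rU] := leqP #|U| r.
  have := @card_subspaces_supmx k r (unit_span F U); rewrite mxrank_unit_span => /(_ Ur).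
  rewrite -gbin_prod_ratio // => <-; rewrite -!pmulrn natrM mulfK //.
  rewrite pnatr_eq0 -lt0n prodn_gt0 // => i.
  by rewrite subn_gt0 ltn_exp2l // -ltn_subRL ltn_ord.
rewrite /gbin subr_ge0 lez_nat leqNgt rU /=.
suff -> : [set V in subspaces k r | (unit_span F U <= V)%MS] = set0 by rewrite cards0.
apply/setP => V; rewrite !inE; apply/negP => /andP[/andP[_ /eqP rankV]].
by move/mxrankS; rewrite mxrank_unit_span rankV leqNgt rU.
Qed.

Lemma card_mx_row_space n k (V : 'M[F]_k) : <<V>>%MS == V ->
  #|[set M : 'M[F]_(n, k) | <<M>>%MS == V]| = #|[set C : 'M[F]_(n, \rank V) | row_full C]|.
Proof.
move=> genV; set B := row_base V.
have [B' BB'] := row_freeP (row_base_free V).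
have mulB_inj : injective (fun C : 'M[F]_(n, \rank V) => C *m B).
  by apply: (can_inj (g := mulmx^~ B')) => C; rewrite /= -mulmxA BB' mulmx1.
rewrite -(card_imset _ mulB_inj); apply: eq_card => M; rewrite inE.
apply/eqP/imsetP => [genM | [C]].
  have /submxP[C defM] : (M <= B)%MS by rewrite eq_row_base -genM genmxE.
  exists C; rewrite // inE /row_full.
  by rewrite -(mxrankMfree C (row_base_free V)) -defM -mxrank_gen genM.
rewrite inE => fullC ->; apply: etrans (eqP genV); apply/genmxP.
have sCBV : (C *m B <= V)%MS by rewrite -(eq_row_base V) submxMl.
by rewrite -(mxrank_leqif_eq sCBV).2 (mxrankMfree _ (row_base_free V)) (eqP fullC).
Qed.

Lemma card_mx_rank_row_space n k r (P : pred 'M[F]_k) :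
  #|[set M : 'M[F]_(n, k) | (\rank M == r) && P <<M>>%MS]| =
  (#|[set V in subspaces k r | P V]| * #|[set C : 'M[F]_(n, r) | row_full C]|)%N.
Proof.
rewrite -sum_nat_const -sum1_card.
rewrite (partition_big (fun M : 'M[F]_(n, k) => <<M>>%MS)
  (mem [set V in subspaces k r | P V])) /=; last first.
  by move=> M; rewrite !inE genmx_id eqxx mxrank_gen.
apply: eq_bigr => V; rewrite !inE => /andP[/andP[genV /eqP <-] PV].
rewrite -(card_mx_row_space n genV) sum1_card; apply: eq_card => M.
rewrite [LHS]unfold_in /= !inE.
by case: (eqVneq <<M>>%MS V) => [genM|]; rewrite ?andbF // genM PV -genM mxrank_gen eqxx.
Qed.

Lemma card_subspaces_unit_rows_geq k r x : (x <= r)%N -> (r <= k)%N ->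
  #|[set V in subspaces k r | (x <= #|unit_rows_in V|)%N]|%:Q =
  \sum_(x <= i < r.+1)
    ('C(k, i)%:Q * \sum_(0 <= j < (k - i).+1)
       ((-1) ^+ j * 'C(k - i, j)%:Q * gbin q ((k - i - j)%:Z) (r%:Z - i%:Z - j%:Z))).
Proof.
move=> xr rk; set g := fun u : nat => gbin q (k - u)%N%:Z (r%:Z - u%:Z).
rewrite -pmulrn (card_geq_incl_excl _ (fun V => V \in subspaces k r) (@unit_rows_in F k k)).
under eq_bigr => S _ do under eq_bigr => U _ do rewrite pmulrn card_subspaces_unit_rows //.
under eq_bigr => S _ do
  rewrite (sum_supsets_cardT _ (fun u => (-1) ^+ (u - #|S|) * g u)) card_ord.
rewrite (sum_card_geq _ (fun s =>
  \sum_(j < (k - s).+1) (-1) ^+ (s + j - s) * g (s + j)%N *+ 'C(k - s, j))) card_ord.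
(* The terms with i > r vanish, [gbin] being 0 for a negative lower index. *)
rewrite (@big_cat_nat _ _ _ r.+1) ?(leq_trans xr) //= [X in _ + X]big_nat_cond.
rewrite [X in _ + X]big1 ?addr0 => [|i /andP[/andP[ri _] _]]; last first.
  rewrite big1 ?mul0rn // => j _; rewrite /g /gbin ifF ?mulr0 ?mul0rn //.
  by rewrite subr_ge0 lez_nat leqNgt (leq_trans ri) ?leq_addr.
apply: eq_bigr => i _; rewrite -!pmulrn mulr_natl big_mkord; congr (_ *+ _).
apply: eq_bigr => j _; rewrite addKn -!pmulrn mulr_natr mulrnAl.
by rewrite /g subnDA PoszD opprD addrA.
Qed.
End FiniteField.

Theorem corollary1 (F : finFieldType) (n k r x : nat)
    (hxr : (x <= r)%N) (hrnk : (r <= minn n k)%N) :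
  let q := #|F| in
  (#|[set M : 'M[F]_(n, k) | (\rank M == r) && (x <= #|unit_rows_in M|)%N]|%:Q
     / #|[set M : 'M[F]_(n, k) | \rank M == r]|%:Q)
  = (gbin q k r)^-1 *
    \sum_(x <= i < r.+1)
      ('C(k, i)%:Q *
       \sum_(0 <= j < (k - i).+1)
         ((-1) ^+ j * 'C(k - i, j)%:Q
          * gbin q ((k - i - j)%:Z) (r%:Z - i%:Z - j%:Z))).
Proof.
move=> q; have /andP[rn rk] : (r <= n)%N && (r <= k)%N by rewrite -leq_min.
have by_row_space (P : pred {set 'I_k}) :
    #|[set M : 'M[F]_(n, k) | (\rank M == r) && P (unit_rows_in M)]| =
    (#|[set V in subspaces F k r | P (unit_rows_in V)]| *
     #|[set C : 'M[F]_(n, r) | row_full C]|)%N.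
  rewrite -(card_mx_rank_row_space n r (fun V => P (unit_rows_in V))).
  by apply: eq_card => M; rewrite !inE unit_rows_in_genmx.
have -> : [set M : 'M[F]_(n, k) | \rank M == r] =
          [set M | (\rank M == r) && (set0 \subset unit_rows_in M)].
  by apply/setP => M; rewrite !inE sub0set andbT.
have full_gt0 : (0 < #|[set C : 'M[F]_(n, r) | row_full C]|)%N.
  by apply/card_gt0P; exists (pid_mx r); rewrite inE /row_full rank_pid_mx.
rewrite (by_row_space (fun U => x <= #|U|)%N) (by_row_space (fun U => set0 \subset U)).
rewrite -!pmulrn !natrM invfM mulrACA divff ?pnatr_eq0 -?lt0n // mulr1.
rewrite !pmulrn card_subspaces_unit_rows_geq // card_subspaces_unit_rows // cards0 subn0 subr0.
by rewrite mulrC.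
Qed.
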